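(* Let $0<\gamma_0\le\gamma_1$, $0<\eta\le1/\gamma_1$, let $\Sigma$ be symmetric positive definite with $\gamma_0I\preceq\Sigma^{-1}\preceq\gamma_1I$, and let $S$ be symmetric with $\gamma_0I\preceq S\preceq\gamma_1I$. Define $\Sigma'=(I-\eta S)\Sigma(I-\eta S)$ and $\Sigma''=\frac12\big(\Sigma'+2\eta I+[\Sigma'(\Sigma'+4\eta I)]^{1/2}\big)$. Then $$\gamma_1^{-1}I\preceq\Sigma''\preceq\gamma_0^{-1}I.$$ (Thus, at iteration $k$ of FB--GVI or Stochastic FB--GVI, if $\gamma_0I\preceq\Sigma_k^{-1}\preceq\gamma_1I$ and $\gamma_0I\preceq S_k\preceq\gamma_1I$, then $\gamma_1^{-1}I\preceq\Sigma_{k+1}\preceq\gamma_0^{-1}I$.)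
   Context: $[\cdot]^{1/2}$ is the principal positive semidefinite square root; $\Sigma'$ and $\Sigma'+4\eta I$ commute so their product is positive semidefinite. In FB--GVI/Stochastic FB--GVI the covariance update is $\Sigma_{k+1/2}=(I-\eta S_k)\Sigma_k(I-\eta S_k)$, $\Sigma_{k+1}=\frac12\big(\Sigma_{k+1/2}+2\eta I+[\Sigma_{k+1/2}(\Sigma_{k+1/2}+4\eta I)]^{1/2}\big)$, where $S_k=\mathbb E_{p_k}\nabla^2V$ (deterministic) or $S_k=\nabla^2V(\hat X_k)$ with $\hat X_k\sim p_k$ (stochastic). *)

From HB Require Import structures.
From mathcomp Require Import all_boot all_order all_algebra.
From mathcomp Require Import reals.
From Stdlib Require Import ClassicalEpsilon.
Set Implicit Arguments. Unset Strict Implicit. Unset Printing Implicit Defensive.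
Import Order.TTheory GRing.Theory Num.Theory.
Local Open Scope ring_scope.

Section Defs.
Variables (R : realType) (n : nat).

Definition symmx (A : 'M[R]_n) : Prop := A^T = A.

Definition psdmx (A : 'M[R]_n) : Prop :=
  symmx A /\ forall v : 'cV[R]_n, 0 <= (v^T *m A *m v) 0 0.

Definition pdmx (A : 'M[R]_n) : Prop :=
  symmx A /\ forall v : 'cV[R]_n, v != 0 -> 0 < (v^T *m A *m v) 0 0.

Definition loewner_le (A B : 'M[R]_n) : Prop := psdmx (B - A).

(* principal positive semidefinite square root: the (unique) PSD matrix X
   with X *m X = M (chosen by Hilbert's epsilon; arbitrary if none exists) *)
Definition psd_sqrt (M : 'M[R]_n) : 'M[R]_n :=
  epsilon (inhabits 0) (fun X : 'M[R]_n => psdmx X /\ X *m X = M).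

End Defs.

(* Write A := (I - eta S) Sigma (I - eta S) and X := [A (A + 4 eta I)]^{1/2},
   so that Sigma'' = (A + 2 eta I + X) / 2.  The proof has three parts.
   1. Forward step: the bounds on Sigma^{-1} give g0 Sigma <= I <= g1 Sigma,
      and the functional calculus of S gives (1 - eta g1)^2 I <= (I - eta S)^2
      <= (1 - eta g0)^2 I; together they pin A between (1 - eta g1)^2 / g1 and
      (1 - eta g0)^2 / g0.
   2. Backward (proximal) step: with k := 2/g - 2 eta, the inequality
      Sigma'' >= 1/g (resp. <= 1/g) is X >= k - A (resp. X <= k - A).  Since
      X^2 - (k - A)^2 = (4/g) A - k^2 is affine in A, it follows from the bounds
      on A by the operator monotonicity of the square root: if X is positive
      semidefinite, Z symmetric and X^2 >= Z^2, then X >= Z.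
   3. Both the existence of the principal square root and the monotonicity
      rest on the spectral theorem for real symmetric matrices, obtained from
      the complex spectral theorem of MathComp, used here in polynomial form:
      the quadratic form of p(A) is a nonnegative combination of the values of
      p at the eigenvalues of A. *)
From HB Require Import structures.
From mathcomp Require Import all_boot all_order all_algebra.
From mathcomp Require Import reals.
From mathcomp Require Import complex spectral sesquilinear.
From mathcomp Require Import ring lra.
From Stdlib Require Import ClassicalEpsilon.
Import Order.TTheory GRing.Theory Num.Theory.
Local Open Scope ring_scope.
Set Implicit Arguments. Unset Strict Implicit. Unset Printing Implicit Defensive.

Section QuadraticForm.
Variables (R : realType) (n : nat).
Local Notation M := 'M[R]_n.
Local Notation V := 'cV[R]_n.

Definition dot (u w : V) : R := (u^T *m w) 0 0.

Lemma dotC u w : dot u w = dot w u.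
Proof. by rewrite /dot -[in LHS](trmxK w) -trmx_mul mxE. Qed.
Lemma dotDr u w1 w2 : dot u (w1 + w2) = dot u w1 + dot u w2.
Proof. by rewrite /dot mulmxDr mxE. Qed.
Lemma dotDl u1 u2 w : dot (u1 + u2) w = dot u1 w + dot u2 w.
Proof. by rewrite dotC dotDr !(dotC w). Qed.
Lemma dotZr u a w : dot u (a *: w) = a * dot u w.
Proof. by rewrite /dot -scalemxAr mxE. Qed.
Lemma dotZl u a w : dot (a *: u) w = a * dot u w.
Proof. by rewrite dotC dotZr dotC. Qed.
Lemma dotNr u w : dot u (- w) = - dot u w.
Proof. by rewrite -scaleN1r dotZr mulN1r. Qed.
Lemma dotBr u w1 w2 : dot u (w1 - w2) = dot u w1 - dot u w2.
Proof. by rewrite dotDr dotNr. Qed.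
Lemma dotBl u1 u2 w : dot (u1 - u2) w = dot u1 w - dot u2 w.
Proof. by rewrite dotC dotBr !(dotC w). Qed.
Lemma dotMr u (A : M) w : dot u (A *m w) = dot (A^T *m u) w.
Proof. by rewrite /dot trmx_mul trmxK mulmxA. Qed.
Lemma dot_scalar u a : dot u (a%:M *m u) = a * dot u u.
Proof. by rewrite mul_scalar_mx dotZr. Qed.

Lemma dotE u : dot u u = \sum_i u i 0 ^+ 2.
Proof. by rewrite /dot mxE; apply: eq_bigr => i _; rewrite mxE expr2. Qed.

Lemma dot_ge0 u : 0 <= dot u u.
Proof. by rewrite dotE sumr_ge0 // => i _; rewrite sqr_ge0. Qed.

Lemma dot_gt0 u : u != 0 -> 0 < dot u u.
Proof.
move=> u0; rewrite lt_def dot_ge0 andbT; apply: contraNN u0.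
rewrite dotE => /eqP sq0; apply/eqP/matrixP => i j; rewrite (ord1 j) mxE.
have /(_ i isT) /eqP := psumr_eq0P (fun k _ => sqr_ge0 (u k 0)) sq0.
by rewrite sqrf_eq0 => /eqP.
Qed.

Lemma psdE (A : M) : psdmx A <-> A^T = A /\ forall v, 0 <= dot v (A *m v).
Proof.
rewrite /psdmx /symmx /dot.
by split=> -[symA posA]; split=> // v; rewrite ?mulmxA // -mulmxA.
Qed.

Lemma loewner_scalar_lower (c : R) (A : M) :
  loewner_le c%:M A -> forall v, c * dot v v <= dot v (A *m v).
Proof.
by case/psdE=> _ h v; have := h v; rewrite mulmxBl dotBr dot_scalar subr_ge0.
Qed.

Lemma loewner_scalar_upper (c : R) (A : M) :
  loewner_le A c%:M -> forall v, dot v (A *m v) <= c * dot v v.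
Proof.
by case/psdE=> _ h v; have := h v; rewrite mulmxBl dotBr dot_scalar subr_ge0.
Qed.

Lemma psd_scalar_sub (A : M) (a b : R) : A^T = A ->
  (forall v, b * dot v (A *m v) <= a * dot v v) -> psdmx (a%:M - b *: A).
Proof.
move=> symA h; apply/psdE; split; first by rewrite linearB linearZ /= symA tr_scalar_mx.
by move=> v; rewrite mulmxBl dotBr dot_scalar -scalemxAl dotZr subr_ge0.
Qed.

Lemma psd_sub_scalar (A : M) (a b : R) : A^T = A ->
  (forall v, a * dot v v <= b * dot v (A *m v)) -> psdmx (b *: A - a%:M).
Proof.
move=> symA h; apply/psdE; split; first by rewrite linearB linearZ /= symA tr_scalar_mx.
by move=> v; rewrite mulmxBl dotBr dot_scalar -scalemxAl dotZr subr_ge0.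
Qed.

Lemma psdZ (c : R) (A : M) : 0 <= c -> psdmx A -> psdmx (c *: A).
Proof.
move=> c0 /psdE [symA posA]; apply/psdE; split; first by rewrite linearZ /= symA.
by move=> v; rewrite -scalemxAl dotZr mulr_ge0.
Qed.

Lemma pdmx_unit (A : M) : pdmx A -> A \in unitmx.
Proof.
case=> _ posA; rewrite unitmxE unitfE; apply/negP => /det0P [v v0 vA].
by have := posA v^T; rewrite trmx_eq0 trmxK vA mul0mx mxE ltxx => /(_ v0).
Qed.

(* Inverting a positive definite matrix reverses scalar Loewner bounds:
   c <= Sigma^{-1} gives c Sigma <= I (expand |v - c Sigma v|^2 >= 0) ... *)
Lemma pd_inv_lower (Sg : M) (c : R) : pdmx Sg -> 0 < c ->
  (forall v, c * dot v v <= dot v (invmx Sg *m v)) ->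
  forall v, c * dot v (Sg *m v) <= dot v v.
Proof.
move=> pdSg c0 lo v; have [symSg _] := pdSg.
pose u := Sg *m v.
have uSu : dot u (invmx Sg *m u) = dot u v by rewrite mulmxA mulVmx ?pdmx_unit ?mul1mx.
have vSv : dot v (Sg *m v) = dot u v by rewrite dotMr symSg.
rewrite vSv; have := dot_ge0 (v - c *: u).
rewrite !(dotBl, dotBr, dotZl, dotZr) (dotC v u).
have := ler_wpM2l (ltW c0) (lo u); rewrite uSu.
set a := dot u v; set b := dot u u; nra.
Qed.

(* ... and Sigma^{-1} <= c gives I <= c Sigma (expand the Sigma-norm of
   c v - Sigma^{-1} v). *)
Lemma pd_inv_upper (Sg : M) (c : R) : pdmx Sg -> 0 < c ->
  (forall v, dot v (invmx Sg *m v) <= c * dot v v) ->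
  forall v, dot v v <= c * dot v (Sg *m v).
Proof.
move=> pdSg c0 hi v; have [symSg posSg] := pdSg.
have posSg' w : 0 <= dot w (Sg *m w).
  have [->|w0] := eqVneq w 0; first by rewrite mulmx0 /dot mulmx0 mxE.
  by apply: ltW; have := posSg w w0; rewrite -mulmxA.
pose u := invmx Sg *m v.
have Su : Sg *m u = v by rewrite mulmxA mulmxV ?pdmx_unit ?mul1mx.
have := posSg' (c *: v - u).
rewrite mulmxBr -scalemxAr Su !(dotBl, dotBr, dotZl, dotZr).
rewrite (dotMr u) symSg Su (dotC u v).
have := hi v; have := mulr_ge0 (ltW c0) (dot_ge0 v).
set a := dot v (Sg *m v); set b := dot v v; set q := dot v u; nra.
Qed.

End QuadraticForm.

Lemma psd0 (R : realType) (A : 'M[R]_0) : psdmx A.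
Proof.
split; first by apply/matrixP => i; case: i.
by move=> v; rewrite mxE big1 // => j _; rewrite mxE big_ord0 mul0r.
Qed.

Section RealSymmetricSpectral.
Variable R : realType.
Local Notation C := (R[i]).
Local Notation rc := (real_complex R : {rmorphism R -> C}).
Local Notation "A ^c" := (map_mx rc A).

Lemma conj_real_complex (x : R) : Num.conj (rc x) = rc x.
Proof. by apply: conj_Creal; rewrite complex_real. Qed.

Lemma sym_complex_hermitian m (A : 'M[R]_m) : A^T = A -> A^c \is hermsymmx.
Proof.
move=> symA; apply/is_hermitianmxP; rewrite expr0 scale1r.
apply/matrixP => i j; rewrite !mxE conj_real_complex.
by have := congr1 (fun B : 'M[R]_m => B j i) symA; rewrite mxE => ->.
Qed.

Lemma conj_mul_self (z : C) :
  Num.conj z * z = rc (complex.Re z ^+ 2 + complex.Im z ^+ 2).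
Proof.
case: z => a b /=; rewrite [LHS]/GRing.mul /= /real_complex_def.
by congr Complex; rewrite ?expr2; ring.
Qed.

Variables (n : nat) (A : 'M[R]_n.+1).
Hypothesis symA : A^T = A.
Local Notation P := (spectralmx A^c).

(* The eigenvalues of A, listed with multiplicity: the real parts of the
   (real) diagonal of the complex spectral decomposition A = P^-1 D P. *)
Definition spec_eig (i : 'I_n.+1) : R := complex.Re (spectral_diag A^c 0 i).

Lemma spec_eigE i : rc (spec_eig i) = spectral_diag A^c 0 i.
Proof.
apply: RRe_real; apply: (mxOverP (hermitian_spectral_diag_real _)).
exact: sym_complex_hermitian.
Qed.

Lemma horner_mx_spectral (p : {poly R}) :
  (horner_mx A p)^c = invmx P *m diag_mx (\row_i rc p.[spec_eig i]) *m P.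
Proof.
have /orthomx_spectralP eA := hermitian_normalmx (sym_complex_hermitian symA).
rewrite map_horner_mx [in LHS]eA (horner_mx_uconjC _ _ (spectral_unit _)).
rewrite horner_mx_diag; congr (_ *m diag_mx _ *m _).
by apply/matrixP => a i; rewrite !mxE (ord1 a) -spec_eigE horner_map.
Qed.

Lemma spec_eigP i : exists2 v : 'cV[R]_n.+1, v != 0 & A *m v = spec_eig i *: v.
Proof.
have Punit := spectral_unit A^c.
have /orthomx_spectralP eA := hermitian_normalmx (sym_complex_hermitian symA).
pose e := (delta_mx 0 i : 'rV[C]_n.+1) *m P.
have e0 : e != 0.
  apply/eqP => /(congr1 (mulmx^~ (invmx P))).
  rewrite mul0mx /e mulmxK // => /matrixP /(_ 0 i); rewrite !mxE !eqxx /=.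
  by move/eqP; rewrite oner_eq0.
have eA_e : e *m A^c = spectral_diag A^c 0 i *: e.
  rewrite [in LHS]eA /e !mulmxA mulmxK // scalemxAl; congr (_ *m _).
  rewrite mul_mx_diag; apply/matrixP => a b; rewrite !mxE.
  by case: (eqVneq b i) => [->|]; rewrite ?andbF ?mul0r ?mulr0 // mulrC.
have : eigenvalue A^c (spectral_diag A^c 0 i) by apply/eigenvalueP; exists e.
rewrite eigenvalue_root_char -map_char_poly -spec_eigE fmorph_root.
rewrite -eigenvalue_root_char => /eigenvalueP [u uA u0].
exists u^T; first by rewrite trmx_eq0.
by rewrite -{1}symA -trmx_mul uA linearZ.
Qed.

Lemma quadform_horner_mx (v : 'cV[R]_n.+1) :
  exists w : 'I_n.+1 -> R, (forall i, 0 <= w i) /\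
    forall p, dot v (horner_mx A p *m v) = \sum_i p.[spec_eig i] * w i.
Proof.
have Pu := spectral_unitarymx A^c.
pose z := P *m v^c.
exists (fun i => complex.Re (z i 0) ^+ 2 + complex.Im (z i 0) ^+ 2).
split=> [i|p]; first by rewrite addr_ge0 // sqr_ge0.
rewrite /dot mulmxA; apply: (fmorph_inj rc).
have zt : (z ^t* )%sesqui = (v^c)^T *m (P ^t* )%sesqui.
  rewrite /z trmx_mul map_mxM; congr (_ *m _).
  by apply/matrixP => a b; rewrite !mxE; exact: conj_real_complex.
have rc00 (B : 'M[R]_1) : rc (B 0 0) = B^c 0 0 by rewrite mxE.
rewrite rc00.
rewrite !map_mxM -map_trmx horner_mx_spectral (invmx_unitary Pu) !mulmxA.
rewrite -zt -(mulmxA _ P) -/z mxE rmorph_sum; apply: eq_bigr => j _.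
rewrite mul_mx_diag !mxE rmorphM -conj_mul_self.
by rewrite mulrAC [LHS]mulrC.
Qed.

Lemma horner_mx_eq0 (p : {poly R}) :
  (forall i, p.[spec_eig i] = 0) -> horner_mx A p = 0.
Proof.
move=> p0; apply: (@map_mx_inj _ _ rc); rewrite horner_mx_spectral map_mx0.
have -> : diag_mx (\row_i rc p.[spec_eig i]) = 0 :> 'M[C]_n.+1.
  by apply/matrixP => a b; rewrite !mxE p0 rmorph0 mul0rn.
by rewrite mulmx0 mul0mx.
Qed.

End RealSymmetricSpectral.

Lemma interp_seq (R : fieldType) (s : seq R) (f : R -> R) :
  exists q : {poly R}, forall x, x \in s -> q.[x] = f x.
Proof.
elim: s => [|x s [q hq]]; first by exists 0.
have [xs|xs] := boolP (x \in s).
  by exists q => y; rewrite inE => /predU1P [->|]; apply: hq.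
pose r := \prod_(y <- s) ('X - y%:P).
have rx : r.[x] != 0.
  rewrite /r horner_prod prodf_seq_neq0; apply/allP => y ys /=.
  by rewrite hornerXsubC subr_eq0; apply: contraNneq xs => ->.
have ry y : y \in s -> r.[y] = 0.
  move=> ys; apply/eqP; rewrite /r horner_prod prodf_seq_eq0; apply/hasP.
  by exists y => //=; rewrite hornerXsubC subrr.
exists (q + ((f x - q.[x]) / r.[x]) *: r) => y; rewrite inE hornerD hornerZ.
case/predU1P => [->|ys]; first by rewrite divfK // addrC subrK.
by rewrite (ry y ys) mulr0 addr0 hq.
Qed.

Section FunctionalCalculus.
Variables (R : realType) (n : nat) (A : 'M[R]_n.+1).
Hypothesis symA : A^T = A.

Lemma spec_eig_ge (a : R) :
  (forall v, a * dot v v <= dot v (A *m v)) -> forall i, a <= spec_eig A i.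
Proof.
move=> lo i; have [v v0 Av] := spec_eigP symA i.
by have := lo v; rewrite Av dotZr ler_pM2r // dot_gt0.
Qed.

Lemma spec_eig_le (b : R) :
  (forall v, dot v (A *m v) <= b * dot v v) -> forall i, spec_eig A i <= b.
Proof.
move=> hi i; have [v v0 Av] := spec_eigP symA i.
by have := hi v; rewrite Av dotZr ler_pM2r // dot_gt0.
Qed.

Lemma horner_mx_sym (p : {poly R}) : (horner_mx A p)^T = horner_mx A p.
Proof.
elim/poly_ind: p => [|p c IH]; first by rewrite rmorph0 trmx0.
rewrite rmorphD rmorphM /= horner_mx_X horner_mx_C linearD /= tr_scalar_mx.
congr (_ + _); rewrite [_ * A]/(_ *m _) trmx_mul IH symA.
exact: comm_mx_horner (comm_mx_refl A).
Qed.

Lemma horner_mx_psd (p : {poly R}) :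
  (forall i, 0 <= p.[spec_eig A i]) -> forall v, 0 <= dot v (horner_mx A p *m v).
Proof.
move=> p0 v; have [w [w0 ->]] := quadform_horner_mx symA v.
by apply: sumr_ge0 => i _; apply: mulr_ge0.
Qed.

Lemma horner_mx_psd_on (a b : R) (p : {poly R}) :
  (forall v, a * dot v v <= dot v (A *m v)) ->
  (forall v, dot v (A *m v) <= b * dot v v) ->
  (forall x, a <= x <= b -> 0 <= p.[x]) ->
  forall v, 0 <= dot v (horner_mx A p *m v).
Proof.
move=> lo hi p0; apply: horner_mx_psd => i.
by apply: p0; rewrite spec_eig_ge ?spec_eig_le.
Qed.

Lemma exists_pos_eigvec (u : 'cV[R]_n.+1) : 0 < dot u (A *m u) ->
  exists2 v : 'cV[R]_n.+1, v != 0 & exists2 l, 0 < l & A *m v = l *: v.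
Proof.
move=> uAu; have [i di] : exists i, 0 < spec_eig A i.
  apply/existsP; apply: contraTT uAu; rewrite negb_exists => /forallP di.
  have [w [w0 ew]] := quadform_horner_mx symA u.
  rewrite -leNgt -{1}(horner_mx_X A) ew.
  apply: sumr_le0 => i _; rewrite hornerX mulr_le0_ge0 //.
  by rewrite leNgt di.
by have [v v0 Av] := spec_eigP symA i; exists v => //; exists (spec_eig A i).
Qed.

(* If p >= 0 on the spectrum, p(A) has a positive semidefinite square root,
   namely q(A) for a polynomial q interpolating sqrt(p) on the spectrum. *)
Lemma psd_sqrt_horner (p : {poly R}) : (forall i, 0 <= p.[spec_eig A i]) ->
  exists X : 'M[R]_n.+1, psdmx X /\ X *m X = horner_mx A p.
Proof.
move=> p0.
have [q hq] := interp_seq [seq spec_eig A i | i <- enum 'I_n.+1]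
  (fun x => Num.sqrt p.[x]).
have qE i : q.[spec_eig A i] = Num.sqrt p.[spec_eig A i].
  by apply: hq; apply: map_f; rewrite mem_enum.
exists (horner_mx A q); split.
  apply/psdE; split; first exact: horner_mx_sym.
  by apply: horner_mx_psd => i; rewrite qE sqrtr_ge0.
apply/eqP; rewrite -subr_eq0 -[_ *m _]/(_ * _) -rmorphM -rmorphB; apply/eqP.
apply: horner_mx_eq0 => // i.
by rewrite hornerD hornerN hornerM qE -expr2 sqr_sqrtr ?subrr.
Qed.

End FunctionalCalculus.

(* Otherwise Z - X has an eigenvector v for some
   eigenvalue l > 0, and v^T (X^2 - Z^2) v = - l (2 v^T X v + l |v|^2) < 0. *)
Lemma sqrt_mono (R : realType) (n : nat) (X Z : 'M[R]_n.+1) :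
  psdmx X -> Z^T = Z -> psdmx (X *m X - Z *m Z) -> psdmx (X - Z).
Proof.
move=> /psdE [symX posX] symZ /psdE [_ posXZ].
have symZX : (Z - X)^T = Z - X by rewrite linearB /= symX symZ.
apply/psdE; split; first by rewrite linearB /= symX symZ.
move=> u; rewrite leNgt; apply/negP => uXZu.
have [v v0 [l l0 eigv]] : exists2 v : 'cV[R]_n.+1, v != 0 &
    exists2 l, 0 < l & (Z - X) *m v = l *: v.
  by apply: (exists_pos_eigvec symZX (u := u)); rewrite -opprB mulNmx dotNr oppr_gt0.
have Zv : Z *m v = X *m v + l *: v by rewrite -eigv mulmxBl addrC subrK.
have := posXZ v; rewrite mulmxBl dotBr -!mulmxA !(dotMr v X) !(dotMr v Z) symX symZ.
rewrite Zv dotDl !dotDr !dotZl !dotZr !(dotC (X *m v) v).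
have := mulr_ge0 (ltW l0) (posX v); have := mulr_gt0 l0 (mulr_gt0 l0 (dot_gt0 v0)).
lra.
Qed.

Lemma psd_sqrtP (R : realType) (n : nat) (M : 'M[R]_n) :
  (exists X, psdmx X /\ X *m X = M) ->
  psdmx (psd_sqrt M) /\ psd_sqrt M *m psd_sqrt M = M.
Proof. exact: epsilon_spec. Qed.

Section ProximalStep.
Variables (R : realType) (n : nat) (eta : R).
Hypothesis eta_gt0 : 0 < eta.
Local Notation M := 'M[R]_n.+1.

Definition prox_cov (A : M) : M :=
  2^-1 *: (A + (2 * eta)%:M + psd_sqrt (A *m (A + (4 * eta)%:M))).

Lemma psd_sqrt_prox (A : M) : A^T = A -> (forall v, 0 <= dot v (A *m v)) ->
  let X := psd_sqrt (A *m (A + (4 * eta)%:M)) in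
  psdmx X /\ X *m X = A *m (A + (4 * eta)%:M).
Proof.
move=> symA posA; apply: psd_sqrtP.
have [X [psdX sqrX]] : exists X, psdmx X /\
    X *m X = horner_mx A ('X * ('X + (4 * eta)%:P)).
  apply: psd_sqrt_horner => // i.
  have eig0 : 0 <= spec_eig A i by apply: spec_eig_ge => // v; rewrite mul0r.
  by rewrite !hornerE mulr_ge0 // addr_ge0 // mulr_ge0 // ltW.
exists X; split=> //.
by rewrite sqrX rmorphM rmorphD /= horner_mx_X horner_mx_C.
Qed.

Lemma sqr_scalar_sub (A : M) (k e : R) :
  (k%:M - A) *m (k%:M - A) - A *m (A + e%:M) = (k ^+ 2)%:M - (2 * k + e) *: A.
Proof.
rewrite mulmxBl !mulmxBr mulmxDr !mul_scalar_mx !mul_mx_scalar scale_scalar_mx.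
by apply/matrixP => i j; rewrite !mxE; case: (i == j); rewrite ?mulr1n ?mulr0n; ring.
Qed.

Lemma half_sum_sub_scalar (A X : M) (g : R) :
  2^-1 *: (A + (2 * eta)%:M + X) - g%:M
  = 2^-1 *: (X - ((2 * g - 2 * eta)%:M - A)).
Proof.
apply/matrixP => i j; rewrite !mxE.
by case: (i == j); rewrite ?mulr1n ?mulr0n; field.
Qed.

Lemma scalar_sub_half_sum (A X : M) (g : R) :
  g%:M - 2^-1 *: (A + (2 * eta)%:M + X)
  = 2^-1 *: (((2 * g - 2 * eta)%:M - A) - X).
Proof. by rewrite -opprB half_sum_sub_scalar -scalerN opprB. Qed.

Lemma prox_cov_lower (g : R) (A : M) : 0 < g -> A^T = A ->
  (forall v, 0 <= dot v (A *m v)) ->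
  (forall v, (1 - eta * g) ^+ 2 * dot v v <= g * dot v (A *m v)) ->
  loewner_le (g^-1)%:M (prox_cov A).
Proof.
move=> g0 symA posA lo.
have [psdX sqrX] := psd_sqrt_prox symA posA.
rewrite /loewner_le /prox_cov half_sum_sub_scalar.
apply: psdZ; first by rewrite invr_ge0 ler0n.
set k := 2 * g^-1 - 2 * eta.
apply: sqrt_mono psdX _ _; first by rewrite linearB /= tr_scalar_mx symA.
rewrite sqrX -opprB sqr_scalar_sub opprB; apply: psd_sub_scalar symA _ => v.
rewrite -(ler_pM2l (exprn_gt0 2 g0)).
have -> : g ^+ 2 * (k ^+ 2 * dot v v) = 4 * ((1 - eta * g) ^+ 2 * dot v v).
  by rewrite /k; field; rewrite gt_eqF.
have -> : g ^+ 2 * ((2 * k + 4 * eta) * dot v (A *m v)) = 4 * (g * dot v (A *m v)).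
  by rewrite /k; field; rewrite gt_eqF.
by rewrite ler_pM2l.
Qed.

(* Upper bound: A <= (1 - eta g)^2 / g implies prox_cov A <= 1 / g, provided
   eta g <= 1 (so that k - A is itself positive semidefinite). *)
Lemma prox_cov_upper (g : R) (A : M) : 0 < g -> eta * g <= 1 -> A^T = A ->
  (forall v, 0 <= dot v (A *m v)) ->
  (forall v, g * dot v (A *m v) <= (1 - eta * g) ^+ 2 * dot v v) ->
  loewner_le (prox_cov A) (g^-1)%:M.
Proof.
move=> g0 eg1 symA posA up.
have [psdX sqrX] := psd_sqrt_prox symA posA.
have [symX _] := proj1 (psdE _) psdX.
rewrite /loewner_le /prox_cov scalar_sub_half_sum.
apply: psdZ; first by rewrite invr_ge0 ler0n.
set k := 2 * g^-1 - 2 * eta.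
have psdY : psdmx (k%:M - A).
  rewrite -[A in _ - A]scale1r; apply: psd_scalar_sub symA _ => v.
  rewrite -(ler_pM2l g0) mul1r (le_trans (up v)) //.
  have -> : g * (k * dot v v) = (2 - 2 * (eta * g)) * dot v v.
    by rewrite /k; field; rewrite gt_eqF.
  rewrite ler_wpM2r ?dot_ge0 //.
  have : 0 < eta * g by rewrite mulr_gt0.
  nra.
apply: sqrt_mono psdY symX _.
rewrite sqrX sqr_scalar_sub; apply: psd_scalar_sub symA _ => v.
rewrite -(ler_pM2l (exprn_gt0 2 g0)).
have -> : g ^+ 2 * (k ^+ 2 * dot v v) = 4 * ((1 - eta * g) ^+ 2 * dot v v).
  by rewrite /k; field; rewrite gt_eqF.
have -> : g ^+ 2 * ((2 * k + 4 * eta) * dot v (A *m v)) = 4 * (g * dot v (A *m v)).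
  by rewrite /k; field; rewrite gt_eqF.
by rewrite ler_pM2l.
Qed.

End ProximalStep.

Section ForwardStep.
Variables (R : realType) (n : nat) (g0 g1 eta : R).
Hypotheses (g0_gt0 : 0 < g0) (g1_gt0 : 0 < g1).
Hypotheses (eta_ge0 : 0 <= eta) (eta_g1 : eta * g1 <= 1).

(* If g0 <= S <= g1 then (1 - eta g1)^2 <= (I - eta S)^2 <= (1 - eta g0)^2,
   because x |-> (1 - eta x)^2 is monotone on [g0, g1] when eta g1 <= 1. *)
Lemma step_mx_bounds (S : 'M[R]_n.+1) : S^T = S ->
  (forall v, g0 * dot v v <= dot v (S *m v)) ->
  (forall v, dot v (S *m v) <= g1 * dot v v) ->
  let T := 1%:M - eta *: S in forall v,
  (1 - eta * g1) ^+ 2 * dot v v <= dot (T *m v) (T *m v)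
                               <= (1 - eta * g0) ^+ 2 * dot v v.
Proof.
move=> symS loS hiS T v.
pose p : {poly R} := 1 - eta *: 'X.
have symT : T^T = T by rewrite /T linearB linearZ /= tr_scalar_mx symS.
have TTE : dot (T *m v) (T *m v) = dot v (horner_mx S (p * p) *m v).
  rewrite (dotMr (T *m v)) symT dotC mulmxA rmorphM /= rmorphB /= rmorph1.
  by rewrite linearZ /= horner_mx_X.
have a0_ge0 : 0 <= 1 - eta * g1 by rewrite subr_ge0.
have onI x : g0 <= x <= g1 ->
    (1 - eta * g1 <= 1 - eta * x) && (1 - eta * x <= 1 - eta * g0).
  by case/andP=> x0 x1; rewrite !lerD2l !lerN2 !ler_wpM2l.
rewrite TTE; apply/andP; split.
- have := horner_mx_psd_on symS loS hiS (p := p * p - ((1 - eta * g1) ^+ 2)%:P) _ v.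
  rewrite rmorphB /= horner_mx_C mulmxBl dotBr dot_scalar subr_ge0; apply=> x.
  case/onI/andP=> t0 _; rewrite /p !hornerE subr_ge0 expr2.
  exact: ler_pM.
- have := horner_mx_psd_on symS loS hiS (p := ((1 - eta * g0) ^+ 2)%:P - p * p) _ v.
  rewrite rmorphB /= horner_mx_C mulmxBl dotBr dot_scalar subr_ge0; apply=> x.
  case/onI/andP=> t0 t1; rewrite /p !hornerE subr_ge0 expr2.
  by apply: ler_pM => //; apply: le_trans t0.
Qed.

Lemma forward_cov_bounds (Sg S : 'M[R]_n.+1) : pdmx Sg -> S^T = S ->
  (forall v, g0 * dot v v <= dot v (invmx Sg *m v)) ->
  (forall v, dot v (invmx Sg *m v) <= g1 * dot v v) ->
  (forall v, g0 * dot v v <= dot v (S *m v)) ->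
  (forall v, dot v (S *m v) <= g1 * dot v v) ->
  let A := (1%:M - eta *: S) *m Sg *m (1%:M - eta *: S) in
  [/\ A^T = A, forall v, 0 <= dot v (A *m v),
      forall v, (1 - eta * g1) ^+ 2 * dot v v <= g1 * dot v (A *m v)
    & forall v, g0 * dot v (A *m v) <= (1 - eta * g0) ^+ 2 * dot v v].
Proof.
move=> pdSg symS loSi hiSi loS hiS A.
have [symSg _] := pdSg.
set T := 1%:M - eta *: S in A *.
have symT : T^T = T by rewrite /T linearB linearZ /= tr_scalar_mx symS.
have AE v : dot v (A *m v) = dot (T *m v) (Sg *m (T *m v)).
  by rewrite /A -!mulmxA (dotMr v T) symT.
have TT := step_mx_bounds symS loS hiS.
have loA v : (1 - eta * g1) ^+ 2 * dot v v <= g1 * dot v (A *m v).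
  have /andP [loT _] := TT v.
  by rewrite AE (le_trans loT) // pd_inv_upper.
split=> //.
- by rewrite /A !trmx_mul symT symSg mulmxA.
- move=> v; rewrite -(pmulr_rge0 _ g1_gt0) (le_trans _ (loA v)) //.
  by rewrite mulr_ge0 ?sqr_ge0 ?dot_ge0.
- move=> v; have /andP [_ upT] := TT v.
  by rewrite AE (le_trans _ upT) // pd_inv_lower.
Qed.

End ForwardStep.

Theorem mainTheorem14 (R : realType) (n : nat)
  (gamma0 gamma1 eta : R) (Sigma S : 'M[R]_n) :
  0 < gamma0 -> gamma0 <= gamma1 ->
  0 < eta -> eta <= 1 / gamma1 ->
  pdmx Sigma ->
  loewner_le (gamma0%:M) (invmx Sigma) -> loewner_le (invmx Sigma) (gamma1%:M) ->
  symmx S ->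
  loewner_le (gamma0%:M) S -> loewner_le S (gamma1%:M) ->
  let Sigma' := (1%:M - eta *: S) *m Sigma *m (1%:M - eta *: S) in
  let Sigma'' := 2^-1 *: (Sigma' + (2 * eta)%:M
                   + psd_sqrt (Sigma' *m (Sigma' + (4 * eta)%:M))) in
  loewner_le (gamma1^-1)%:M Sigma'' /\ loewner_le Sigma'' (gamma0^-1)%:M.
Proof.
case: n Sigma S => [|m] Sg S; first by move=> *; split; apply: psd0.
move=> g0 g01 eta0 eta_g1 pdSg loSi hiSi symS loS hiS Sg' Sg''.
have g1 : 0 < gamma1 := lt_le_trans g0 g01.
have eg1 : eta * gamma1 <= 1.
  by rewrite -ler_pdivlMr // mul1r -[gamma1^-1]mul1r.
have eg0 : eta * gamma0 <= 1 := le_trans (ler_wpM2l (ltW eta0) g01) eg1.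
have [symA posA loA upA] := forward_cov_bounds g0 g1 (ltW eta0) eg1 pdSg symS
  (loewner_scalar_lower loSi) (loewner_scalar_upper hiSi)
  (loewner_scalar_lower loS) (loewner_scalar_upper hiS).
by split; [apply: prox_cov_lower | apply: prox_cov_upper].
Qed.
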